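(* Let $\ket{\varphi_0}=\xi_0\ket{00}+\xi_1\ket{01}+\xi_2\ket{10}+\xi_3\ket{11}$ be a 2-qubit state (unit vector in $\mathbb{C}^4$) and let $A=\begin{pmatrix}\xi_0&\xi_1\\\xi_2&\xi_3\end{pmatrix}$. (1) If $\det A=0$, let $(v_1,v_2)\neq(0,0)$ be a vector such that both columns of $A$ are multiples of $(v_1,v_2)$, let $K_1=U(\bar v_1,\bar v_2)$; then $(K_1\otimes I)\ket{\varphi_0}=\eta_0\ket{00}+\eta_1\ket{01}$ for some $\eta_0,\eta_1\in\mathbb{C}$, and with $K_2=U(\bar\eta_0,-\eta_1)^T$ we have $(K_1\otimes K_2)\ket{\varphi_0}=\ket{00}$. (2) If $\det A\neq 0$, let $W_1=R_1(A)^T$. Then $\det$ of the matrix associated to the state $cz\,(I\otimes W_1)\ket{\varphi_0}$ is zero, and if $K_1,K_2$ are the matrices constructed as in part (1) from the state $cz\,(I\otimes W_1)\ket{\varphi_0}$ in place of $\ket{\varphi_0}$, then $(K_1\otimes K_2)\,cz\,(I\otimes W_1)\ket{\varphi_0}=\ket{00}$.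
   Context: For complex $(x,y)\neq(0,0)$, $U(x,y)=\frac{1}{\sqrt{|x|^2+|y|^2}}\begin{pmatrix}x&y\\-\bar y&\bar x\end{pmatrix}$. The matrix associated to a 2-qubit state $t_{00}\ket{00}+t_{01}\ket{01}+t_{10}\ket{10}+t_{11}\ket{11}$ is $\begin{pmatrix}t_{00}&t_{01}\\t_{10}&t_{11}\end{pmatrix}$. $cz=\mathrm{diag}(1,1,1,-1)$ in the basis $\ket{00},\ket{01},\ket{10},\ket{11}$, and $I$ is the $2\times2$ identity. For a nonsingular $A=\begin{pmatrix}a&b\\c&d\end{pmatrix}$, $R_1(A)=U(x,y)$ with $x=d-bk$, $y=\bar c-\bar a\bar k$, where, setting $\beta=a\bar c+b\bar d$, $k=\sqrt{(|c|^2+|d|^2)/(|a|^2+|b|^2)}$ if $\beta=0$ and $k=-\sqrt{(|c|^2+|d|^2)/(|\beta|^2(|a|^2+|b|^2))}\,\bar\beta$ if $\beta\neq0$. $M^T$ denotes the transpose of $M$. *)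

(* Complex numbers: an arbitrary numClosedFieldType C
   (this includes R[i] for any real closed / real field R, in particular C = ℂ). *)
From HB Require Import structures.
From mathcomp Require Import all_boot all_order all_algebra.
From mathcomp Require Import mxtens.
Set Implicit Arguments. Unset Strict Implicit. Unset Printing Implicit Defensive.
Import Order.TTheory GRing.Theory Num.Theory.
Local Open Scope ring_scope.

Section Defs.
Variable C : numClosedFieldType.

(* Basis index of |a b>, a = first qubit (most significant), b = second qubit.
   mxtens_index (a,b) = 2*a + b, consistent with the Kronecker product tensmx. *)
Definition bidx (a b : 'I_2) : 'I_(2 * 2) := mxtens_index (a, b).

Definition q0 : 'I_2 := ord0.
Definition q1 : 'I_2 := ord_max.

Definition ket00 : 'cV[C]_(2 * 2) := delta_mx (bidx q0 q0) 0.
Definition ket01 : 'cV[C]_(2 * 2) := delta_mx (bidx q0 q1) 0.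

Definition unit_state (phi : 'cV[C]_(2 * 2)) : Prop :=
  \sum_(k < 2 * 2) `|phi k 0| ^+ 2 = 1.

Definition state_mat (phi : 'cV[C]_(2 * 2)) : 'M[C]_2 :=
  \matrix_(a < 2, b < 2) phi (bidx a b) 0.

Definition Umat (x y : C) : 'M[C]_2 :=
  (sqrtC (`|x| ^+ 2 + `|y| ^+ 2))^-1 *:
  \matrix_(i < 2, j < 2)
     (if i == q0 then (if j == q0 then x else y)
      else (if j == q0 then - y^* else x^*)).

Definition R1 (A : 'M[C]_2) : 'M[C]_2 :=
  let a := A q0 q0 in let b := A q0 q1 in
  let c := A q1 q0 in let d := A q1 q1 in
  let beta := a * c^* + b * d^* in
  let k := if beta == 0
           then sqrtC ((`|c| ^+ 2 + `|d| ^+ 2) / (`|a| ^+ 2 + `|b| ^+ 2))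
           else - sqrtC ((`|c| ^+ 2 + `|d| ^+ 2) /
                          (`|beta| ^+ 2 * (`|a| ^+ 2 + `|b| ^+ 2))) * beta^* in
  Umat (d - b * k) (c^* - a^* * k^*).

Definition cz : 'M[C]_(2 * 2) :=
  diag_mx (\row_(k < 2 * 2) (if k == bidx q1 q1 then -1 else 1)).

Definition cols_multiple (A : 'M[C]_2) (v1 v2 : C) : Prop :=
  forall j : 'I_2, exists s : C, A q0 j = s * v1 /\ A q1 j = s * v2.

Definition part1_conclusion (phi : 'cV[C]_(2 * 2)) : Prop :=
  forall v1 v2 : C, (v1, v2) != (0, 0) -> cols_multiple (state_mat phi) v1 v2 ->
  let K1 := Umat v1^* v2^* in
  (exists eta0 eta1 : C,
      (K1 *t (1%:M : 'M[C]_2)) *m phi = eta0 *: ket00 + eta1 *: ket01) /\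
  (forall eta0 eta1 : C,
      (K1 *t (1%:M : 'M[C]_2)) *m phi = eta0 *: ket00 + eta1 *: ket01 ->
      let K2 := (Umat eta0^* (- eta1))^T in
      (K1 *t K2) *m phi = ket00).

End Defs.

Arguments cz {C}.
Arguments ket00 {C}.
Arguments ket01 {C}.

From HB Require Import structures.
From mathcomp Require Import all_boot all_order all_algebra.
From mathcomp Require Import mxtens sesquilinear spectral ring.
Set Implicit Arguments. Unset Strict Implicit. Unset Printing Implicit Defensive.
Import Order.TTheory GRing.Theory Num.Theory.
Local Open Scope ring_scope.
Local Open Scope sesquilinear_scope.

(** If [det A = 0], both columns of [A] are multiples of [v], so the unitary
    [K1 = U(conj v1, conj v2)] kills the second row of [K1 A]: the state becomes
    [eta0|00> + eta1|01>], still a unit vector, and [U(conj eta0, -eta1)] sends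
    the row [(eta0, eta1)] to [(1, 0)].
    If [det A <> 0], the matrix of [(I ⊗ W1) phi0] is [A R1(A)] and [cz] negates
    its lower-right entry, so the new determinant is minus the permanent of
    [A U(x, y)] with [x = d - b k], [y = conj c - conj a conj k].  Expanding,
    this permanent is [det A] times
      [(|c|^2 + |d|^2 - |k|^2 (|a|^2 + |b|^2)) + (k beta - conj (k beta))]
    divided by [|x|^2 + |y|^2], and [k] is chosen exactly so that both
    brackets vanish.  As [cz] and [I ⊗ W1] are unitary, part (1) applies to the
    new state. *)


Section Unitary.
Variable C : numClosedFieldType.

Lemma unitarymx1 n : (1%:M : 'M[C]_n) \is unitarymx.
Proof. by apply/unitarymxP; rewrite trmx1 map_mx1 mulmx1. Qed.

Lemma tensmx1 m n : (1%:M : 'M[C]_m) *t (1%:M : 'M[C]_n) = 1%:M.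
Proof.
apply/matrixP => i j.
case: (mxtens_indexP i) => i1 i2; case: (mxtens_indexP j) => j1 j2.
by rewrite tensmxE !mxE (can_eq (@mxtens_indexK _ _)) xpair_eqE -natrM mulnb.
Qed.

Lemma tensmx_unitary m n p q (A : 'M[C]_(m, n)) (B : 'M[C]_(p, q)) :
  A \is unitarymx -> B \is unitarymx -> A *t B \is unitarymx.
Proof.
move=> /unitarymxP uA /unitarymxP uB; apply/unitarymxP.
by rewrite trmx_tens map_mxT tensmx_mul uA uB tensmx1.
Qed.

Lemma diag_mx_unitary n (d : 'rV[C]_n) :
  (forall i, `|d 0 i| = 1) -> diag_mx d \is unitarymx.
Proof.
move=> d1; apply/unitarymxP; rewrite tr_diag_mx map_diag_mx mul_diag_mx.
apply/matrixP => i j; rewrite !mxE.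
by case: eqVneq => [->|_]; rewrite ?mulr0n ?mulr0 // !mulr1n -normCK d1 expr1n.
Qed.

End Unitary.

Section TwoByTwo.
Variable C : numClosedFieldType.

Definition mx2 (a b c d : C) : 'M[C]_2 :=
  \matrix_(i, j) if i == q0 then (if j == q0 then a else b)
                 else (if j == q0 then c else d).

Lemma ord2_cases (i : 'I_2) : i = q0 \/ i = q1.
Proof. by case: i => [[|[|]]] // ?; [left|right]; apply: val_inj. Qed.

Lemma sum_ord2 (F : 'I_2 -> C) : \sum_(i < 2) F i = F q0 + F q1.
Proof. by rewrite big_ord_recl big_ord1; congr (_ + F _); apply: val_inj. Qed.

Lemma mx2E (M : 'M[C]_2) : M = mx2 (M q0 q0) (M q0 q1) (M q1 q0) (M q1 q1).
Proof.
by apply/matrixP => i j; rewrite mxE; case: (ord2_cases i) => ->; case: (ord2_cases j) => ->.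
Qed.

Lemma mulmx2 a b c d a' b' c' d' :
  mx2 a b c d *m mx2 a' b' c' d' =
  mx2 (a * a' + b * c') (a * b' + b * d') (c * a' + d * c') (c * b' + d * d').
Proof.
apply/matrixP => i j; rewrite !mxE sum_ord2 !mxE.
by case: (ord2_cases i) => ->; case: (ord2_cases j) => ->.
Qed.

Lemma scalemx2 k a b c d : k *: mx2 a b c d = mx2 (k * a) (k * b) (k * c) (k * d).
Proof.
by apply/matrixP => i j; rewrite !mxE; case: (ord2_cases i) => ->; case: (ord2_cases j) => ->.
Qed.

Lemma trmxC2 a b c d : (mx2 a b c d)^t* = mx2 a^* c^* b^* d^*.
Proof.
by apply/matrixP => i j; rewrite !mxE; case: (ord2_cases i) => ->; case: (ord2_cases j) => ->.
Qed.

Lemma mx2_1 : 1%:M = mx2 1 0 0 1.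
Proof.
by apply/matrixP => i j; rewrite !mxE; case: (ord2_cases i) => ->; case: (ord2_cases j) => ->.
Qed.

Lemma det_mx22 (M : 'M[C]_2) : \det M = M q0 q0 * M q1 q1 - M q0 q1 * M q1 q0.
Proof.
rewrite (expand_det_row _ q0) sum_ord2 /cofactor !det_mx11 !mxE.
have -> : lift q0 ord0 = q1 by apply: val_inj.
have -> : lift q1 ord0 = q0 by apply: val_inj.
by rewrite /= expr0 expr1; ring.
Qed.

Lemma UmatE (x y : C) :
  Umat x y = (sqrtC (`|x| ^+ 2 + `|y| ^+ 2))^-1 *: mx2 x y (- y^*) x^*.
Proof. by []. Qed.

Lemma Umat_unitary (x y : C) : (x, y) != (0, 0) -> Umat x y \is unitarymx.
Proof.
move=> xy0; apply/unitarymxP; rewrite UmatE scalemx2 trmxC2 mulmx2 mx2_1.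
set r := sqrtC _.
have r_neq0 : r != 0.
  rewrite sqrtC_eq0 paddr_eq0 ?exprn_ge0 // !expf_eq0 /= !normr_eq0.
  by rewrite -xpair_eqE.
have rV : (r^-1)^* = r^-1.
  by rewrite fmorphV /= geC0_conj // sqrtC_ge0 addr_ge0 ?exprn_ge0.
rewrite !rmorphM !rmorphN /= !conjCK rV.
have r2V : r^-1 * r^-1 * (x * x^* + y * y^*) = 1.
  by rewrite -!normCK -(sqrtCK (_ + _)) -/r -expr2 -exprMn mulVf ?expr1n.
by congr mx2; rewrite -?r2V; ring.
Qed.

End TwoByTwo.

Section TwoQubitStates.
Variable C : numClosedFieldType.
Implicit Types phi : 'cV[C]_(2 * 2).

Lemma sum_bidx (F : 'I_(2 * 2) -> C) :
  \sum_k F k = \sum_(i < 2) \sum_(j < 2) F (bidx i j).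
Proof.
rewrite pair_big /=; apply: (reindex (fun ij => bidx ij.1 ij.2)) => /=.
exists (@mxtens_unindex 2 2) => [[i j] _|k _]; rewrite /bidx.
  by rewrite mxtens_indexK.
by rewrite -surjective_pairing mxtens_unindexK.
Qed.

Lemma state_mat_inj : injective (@state_mat C).
Proof.
move=> phi psi /matrixP eq_mat; apply/matrixP => k j; rewrite [j]ord1.
by case: (mxtens_indexP k) => a b; have := eq_mat a b; rewrite !mxE.
Qed.

Lemma state_mat_tens (K L : 'M[C]_2) phi :
  state_mat ((K *t L) *m phi) = K *m state_mat phi *m L^T.
Proof.
apply/matrixP => a b; rewrite !mxE sum_bidx.
under [RHS]eq_bigr do rewrite !mxE big_distrl /=.
rewrite [RHS]exchange_big /=; apply: eq_bigr => i _; apply: eq_bigr => j _.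
by rewrite /bidx tensmxE !mxE mulrAC.
Qed.

Lemma state_mat_ket0 (eta0 eta1 : C) :
  state_mat (eta0 *: ket00 + eta1 *: ket01) = mx2 eta0 eta1 0 0.
Proof.
apply/matrixP => i j; rewrite !mxE (can_eq (@mxtens_indexK _ _)) /=.
by case: (ord2_cases i) => ->; case: (ord2_cases j) => ->; rewrite /= ?mulr1 ?mulr0 ?addr0 ?add0r.
Qed.

Lemma state_mat_ket00 : state_mat (@ket00 C) = mx2 1 0 0 0.
Proof. by rewrite -(state_mat_ket0 1 0) scale1r scale0r addr0. Qed.

Lemma unit_stateE phi :
  unit_state phi = (\sum_(i < 2) \sum_(j < 2) `|state_mat phi i j| ^+ 2 = 1).
Proof.
by rewrite /unit_state sum_bidx; under [in RHS]eq_bigr do under eq_bigr do rewrite mxE.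
Qed.

Lemma unit_state_unitary phi : unit_state phi <-> phi^T \is unitarymx.
Proof.
have normE : phi^T *m phi^T^t* = (\sum_k `|phi k 0| ^+ 2)%:M.
  by apply/matrixP => i j; rewrite !ord1 !mxE; apply: eq_bigr => k _; rewrite !mxE normCK.
split => [phi1|/unitarymxP]; first by apply/unitarymxP; rewrite normE phi1.
by rewrite normE => /matrixP/(_ 0 0); rewrite !mxE.
Qed.

Lemma unit_state_mulmx (U : 'M[C]_(2 * 2)) phi :
  U \is unitarymx -> unit_state phi -> unit_state (U *m phi).
Proof.
rewrite !unit_state_unitary trmx_mul -trmx_unitary => uU uphi.
exact: mul_unitarymx.
Qed.

Lemma unit_state_ket0 (eta0 eta1 : C) :
  unit_state (eta0 *: ket00 + eta1 *: ket01) -> `|eta0| ^+ 2 + `|eta1| ^+ 2 = 1.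
Proof.
by rewrite unit_stateE state_mat_ket0 !sum_ord2 !mxE /= normr0 expr0n /= !addr0.
Qed.

Definition czmx (M : 'M[C]_2) : 'M[C]_2 :=
  mx2 (M q0 q0) (M q0 q1) (M q1 q0) (- M q1 q1).

Lemma state_mat_cz phi : state_mat (cz *m phi) = czmx (state_mat phi).
Proof.
rewrite [in RHS]/czmx [LHS]mx2E /cz mul_diag_mx !mxE /=.
by rewrite !mulN1r !mul1r.
Qed.

Lemma cz_unitary : @cz C \is unitarymx.
Proof.
by apply: diag_mx_unitary => i; rewrite mxE; case: ifP; rewrite ?normrN normr1.
Qed.

End TwoQubitStates.

Lemma unit_state_part1_conclusion (C : numClosedFieldType) (phi : 'cV[C]_(2 * 2)) :
  unit_state phi -> part1_conclusion phi.
Proof.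
move=> phi1 v1 v2 v_neq0 v_cols K1.
set I2 : 'M[C]_2 := 1%:M.
have K1_unitary : K1 *t I2 \is unitarymx.
  apply: tensmx_unitary (unitarymx1 _ _); apply: Umat_unitary.
  by rewrite xpair_eqE !conjC_eq0 -xpair_eqE.
have K1phiE : state_mat ((K1 *t I2) *m phi) = K1 *m state_mat phi.
  by rewrite state_mat_tens trmx1 mulmx1.
have K1phi_row1 j : (K1 *m state_mat phi) q1 j = 0.
  rewrite mxE sum_ord2; have [s [-> ->]] := v_cols j.
  by rewrite /K1 UmatE !mxE /= !conjCK; ring.
split.
  exists ((K1 *m state_mat phi) q0 q0), ((K1 *m state_mat phi) q0 q1).
  apply: state_mat_inj; rewrite state_mat_ket0 K1phiE [LHS]mx2E.
  by rewrite !K1phi_row1.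
move=> eta0 eta1 K1phi K2.
have /unit_state_ket0 eta_norm : unit_state (eta0 *: ket00 + eta1 *: ket01).
  by rewrite -K1phi; apply: unit_state_mulmx.
have -> : K1 *t K2 = (I2 *t K2) *m (K1 *t I2) by rewrite tensmx_mul mul1mx mulmx1.
apply: state_mat_inj; rewrite -mulmxA K1phi state_mat_tens state_mat_ket0 state_mat_ket00.
rewrite mul1mx /K2 trmxK UmatE normrN norm_conjC eta_norm sqrtC1 invr1 scale1r.
rewrite mulmx2 rmorphN /= !conjCK; congr mx2; [|ring..].
by rewrite -eta_norm !normCK; ring.
Qed.

Section R1Coefficient.
Variables (C : numClosedFieldType) (A : 'M[C]_2).
Local Notation a := (A q0 q0).
Local Notation b := (A q0 q1).
Local Notation c := (A q1 q0).
Local Notation d := (A q1 q1).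
Local Notation beta := (a * c^* + b * d^*).

Definition R1_coef : C :=
  if beta == 0
  then sqrtC ((`|c| ^+ 2 + `|d| ^+ 2) / (`|a| ^+ 2 + `|b| ^+ 2))
  else - sqrtC ((`|c| ^+ 2 + `|d| ^+ 2) /
                 (`|beta| ^+ 2 * (`|a| ^+ 2 + `|b| ^+ 2))) * beta^*.
Local Notation k := R1_coef.

Lemma R1E : R1 A = Umat (d - b * k) (c^* - a^* * k^*).
Proof. by []. Qed.

Lemma R1_coef_real : (k * beta)^* = k * beta.
Proof.
rewrite /R1_coef; case: (eqVneq beta 0) => [->|_]; first by rewrite mulr0 conjC0.
set t := sqrtC _; set beta := _ + _.
have t_ge0 : 0 <= t by rewrite sqrtC_ge0 divr_ge0 ?mulr_ge0 ?addr_ge0 ?exprn_ge0.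
rewrite -mulrA mulNr (mulrC beta^*) -normCK rmorphN rmorphM /=.
by rewrite !geC0_conj ?exprn_ge0.
Qed.

Lemma R1_coef_norm : `|a| ^+ 2 + `|b| ^+ 2 != 0 ->
  `|k| ^+ 2 * (`|a| ^+ 2 + `|b| ^+ 2) = `|c| ^+ 2 + `|d| ^+ 2.
Proof.
move=> ab_neq0; rewrite /R1_coef; case: (eqVneq beta 0) => [_|beta_neq0].
  by rewrite ger0_norm ?sqrtC_ge0 ?sqrtCK ?divfK // divr_ge0 ?addr_ge0 ?exprn_ge0.
rewrite normrM normrN norm_conjC exprMn ger0_norm ?sqrtC_ge0; last first.
  by rewrite divr_ge0 ?mulr_ge0 ?addr_ge0 ?exprn_ge0.
by rewrite sqrtCK -mulrA divfK // mulf_neq0 // expf_neq0 // normr_eq0.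
Qed.

Lemma R1_unitary : \det A != 0 -> R1 A \is unitarymx.
Proof.
move=> detA; rewrite R1E; apply: Umat_unitary; apply: contra detA.
rewrite xpair_eqE !subr_eq0 => /andP[/eqP dE /eqP/(congr1 Num.conj)].
rewrite rmorphM /= !conjCK => cE.
by rewrite det_mx22 dE cE; apply/eqP; ring.
Qed.

Lemma det_czmx_R1 : \det (czmx (A *m R1 A)) = 0.
Proof.
have detA_Z : \det A * (c * c^* + d * d^* - k * k^* * (a * a^* + b * b^*)
                       + (k * beta - k^* * (a^* * c + b^* * d))) = 0.
  have [ab_eq0|ab_neq0] := eqVneq (`|a| ^+ 2 + `|b| ^+ 2) 0.
    move/eqP: ab_eq0; rewrite paddr_eq0 ?exprn_ge0 // !expf_eq0 /= !normr_eq0.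
    by case/andP => /eqP a0 /eqP b0; rewrite det_mx22 a0 b0; ring.
  have := R1_coef_norm ab_neq0; have := R1_coef_real.
  rewrite !normCK !(rmorphD, rmorphM) /= !conjCK => -> ->.
  by rewrite !subrr addr0 mulr0.
rewrite R1E UmatE /czmx det_mx22 !mxE !sum_ord2 !mxE /=.
rewrite !(rmorphB, rmorphN, rmorphM) /= !conjCK; set r := sqrtC _.
by rewrite -(mulr0 (- r^-1 ^+ 2)) -{}detA_Z det_mx22; ring.
Qed.

End R1Coefficient.

Theorem mainTheorem4 (C : numClosedFieldType) (phi0 : 'cV[C]_(2 * 2)) :
  unit_state phi0 ->
  (\det (state_mat phi0) = 0 -> part1_conclusion phi0) /\
  (\det (state_mat phi0) != 0 ->
     let W1 := (R1 (state_mat phi0))^T in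
     let psi := cz *m ((1%:M : 'M[C]_2) *t W1) *m phi0 in
     \det (state_mat psi) = 0 /\ part1_conclusion psi).
Proof.
move=> phi0_unit; split=> [_|detA W1 psi]; first exact: unit_state_part1_conclusion.
have W1_unitary : W1 \is unitarymx by rewrite trmx_unitary R1_unitary.
split.
  by rewrite /psi -mulmxA state_mat_cz state_mat_tens mul1mx trmxK det_czmx_R1.
apply: unit_state_part1_conclusion; rewrite /psi -mulmxA.
apply: unit_state_mulmx; first exact: cz_unitary.
by apply: unit_state_mulmx; rewrite // tensmx_unitary ?unitarymx1.
Qed.
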